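(* Consider the deterministic tandem system TSC(RO) described in the context, with $n$ jobs, satisfying for some constants $\lambda>0$, $\mu_1,\dots,\mu_J>0$, $\Gamma_a,\Gamma_{s,1},\dots,\Gamma_{s,J}\ge 0$: $$\Big|\sum_{i=k+1}^{n}U_i-\lambda^{-1}(n-k)\Big|\le \Gamma_a\,\phi(n-k),\qquad k=0,1,\dots,n-1,$$ $$\Big|\sum_{i=k+1}^{n}V^j_i-\mu_j^{-1}(n-k)\Big|\le \Gamma_{s,j}\,\phi(n-k),\qquad k=0,1,\dots,n-1,\ j=1,\dots,J.$$ Let $\Gamma=\max(\Gamma_a,\Gamma_{s,1},\dots,\Gamma_{s,J})$ and assume $\lambda\Gamma\ge e^{2e}$ and $\rho^*:=\lambda/\min_j\mu_j<1$. Then the sojourn time of the $n$-th job satisfies $$W_n\le \frac{7J^2\Gamma^2\lambda}{1-\rho^*}\,\ln\ln\frac{J\lambda\Gamma}{1-\rho^*}+J\lambda^{-1}.$$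
   Context: $\phi(x)=\sqrt{x\ln\ln x}$ for $x\ge e^e$ and $\phi(x)=1$ for $x<e^e$. TSC(RO): servers $S_1,\dots,S_J$ in tandem, initially empty, $n$ jobs. Job $i$ arrives to the buffer of $S_1$ at time $\sum_{l=1}^i U_l$ (nonnegative deterministic interarrival times $U_1,\dots,U_n$, $U_1$ being the arrival time of job 1). Each server processes jobs in FIFO order, is work-conserving, buffers are infinite; job $i$ requires service time $V^j_i\ge 0$ at $S_j$; after service at $S_j$ it joins the buffer of $S_{j+1}$, and after $S_J$ it leaves. The sojourn time $W_n$ of job $n$ is the time between its arrival at $S_1$ and its service completion at $S_J$. *)

From Stdlib Require Import Reals Lra List.
Import ListNotations.
Open Scope R_scope.

Definition phi (x : R) : R :=
  if Rle_dec (exp (exp 1)) x then sqrt (x * ln (ln x)) else 1.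

(* seg_sum f k n = sum_{i=k+1}^{n} f i  (empty, i.e. 0, if n <= k). *)
Definition seg_sum (f : nat -> R) (k n : nat) : R :=
  fold_right Rplus 0 (map f (seq (S k) (n - k))).

Definition arrival (U : nat -> R) (i : nat) : R := seg_sum U 0 i.

(* Service-completion (departure) time of job i at server S_j in the tandem of
   FIFO, work-conserving, infinite-buffer servers, initially empty:
     D_0(i)   = arrival time of job i,
     D_j(0)   = 0  (no job 0; all times are >= 0),
     D_j(i)   = max(D_{j-1}(i), D_j(i-1)) + V^j_i   for j, i >= 1.
   V j i is the service time of job i at server S_j (1-based indices). *)
Fixpoint depart (U : nat -> R) (V : nat -> nat -> R) (j : nat) (i : nat) : R :=
  match j with
  | O => arrival U i
  | S j' =>
      (fix d (i : nat) : R :=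
         match i with
         | O => 0
         | S i' => Rmax (depart U V j' (S i')) (d i') + V (S j') (S i')
         end) i
  end.

Definition sojourn (U : nat -> R) (V : nat -> nat -> R) (J n : nat) : R :=
  depart U V J n - arrival U n.

Definition Gamma_max (Ga : R) (Gs : nat -> R) (J : nat) : R :=
  fold_right Rmax Ga (map Gs (seq 1 J)).

Definition mu_min (mu : nat -> R) (J : nat) : R :=
  fold_right Rmin (mu 1%nat) (map mu (seq 1 J)).

From Stdlib Require Import Reals Lra Lia List.
Open Scope R_scope.

(* Unfolding D_{j+1}(k) = max(D_j(k), D_{j+1}(k-1)) + V^{j+1}_k along a critical
   path shows, by induction on the server j, that D_j(k) <= A_n - (z-1)/lam
   + (z+k-n-1+j)/mu_min + (2j+1) Gamma phi(z) for some z >= n+1-k: each server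
   adds one deviation of its cumulative service at each end of the path segment.
   For job n at server J this gives
   W_n <= J/mu_min - (1-rho) (z-1)/lam + (2J+1) Gamma phi(z), and the negative
   drift absorbs K phi(z) up to 7 M^2 ln ln M with M = J lam Gamma/(1-rho):
   by AM-GM for moderate z, and because K phi(z) <= z once z >= (18 M^2)^2. *)

Lemma ln_le x y : 0 < x -> x <= y -> ln x <= ln y.
Proof.
  intros Hx [Hlt | ->]; [left; apply ln_increasing |]; lra.
Qed.

Lemma ln_ge_of_exp_le a x : exp a <= x -> a <= ln x.
Proof.
  intros H. rewrite <- (ln_exp a). apply ln_le; [apply exp_pos | exact H].
Qed.

Lemma ln_le_sub_1 x : 0 < x -> ln x <= x - 1.
Proof.
  intros Hx. pose proof (exp_ineq1_le (ln x)) as H. rewrite exp_ln in H; lra.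
Qed.

Lemma exp_1_ge_2 : 2 <= exp 1.
Proof. pose proof (exp_ineq1_le 1). lra. Qed.

Lemma ln_ln_ge_1 x : exp (exp 1) <= x -> 1 <= ln (ln x).
Proof.
  intros H. apply ln_ge_of_exp_le, ln_ge_of_exp_le, H.
Qed.

Lemma phi_nonneg x : 0 <= phi x.
Proof. unfold phi. destruct Rle_dec; [apply sqrt_pos | lra]. Qed.

Lemma phi_le a b : a <= b -> phi a <= phi b.
Proof.
  intros Hab. unfold phi.
  pose proof (exp_ineq1_le (exp 1)) as Hee. pose proof exp_1_ge_2.
  destruct (Rle_dec (exp (exp 1)) a) as [Ha | Ha];
    destruct (Rle_dec (exp (exp 1)) b) as [Hb | Hb]; try lra.
  - apply sqrt_le_1_alt.
    pose proof (ln_ln_ge_1 a Ha).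
    assert (Hlnln : ln (ln a) <= ln (ln b)).
    { pose proof (ln_ge_of_exp_le _ _ Ha).
      apply ln_le; [lra |]. apply ln_le; lra. }
    nra.
  - rewrite <- sqrt_1. apply sqrt_le_1_alt. pose proof (ln_ln_ge_1 b Hb). nra.
Qed.

Lemma mul_sqrt_mul_le K x y :
  0 <= x -> 0 <= y -> K * sqrt (x * y) <= x + K ^ 2 * y / 4.
Proof.
  intros Hx Hy. rewrite sqrt_mult by assumption.
  pose proof (sqrt_sqrt x Hx). pose proof (sqrt_sqrt y Hy).
  pose proof (Rle_0_sqr (sqrt x - K * sqrt y / 2)). unfold Rsqr in *. nra.
Qed.

Lemma ln_ln_le_2_sqrt z : exp (exp 1) <= z -> ln (ln z) <= 2 * sqrt z.
Proof.
  intros Hz. pose proof (exp_ineq1_le (exp 1)). pose proof exp_1_ge_2.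
  pose proof (ln_ge_of_exp_le _ _ Hz) as Hlnz.
  assert (Hs : 0 < sqrt z) by (apply sqrt_lt_R0; lra).
  assert (Hlns : ln z = 2 * ln (sqrt z)).
  { rewrite <- (sqrt_sqrt z) at 1 by lra. rewrite ln_mult by assumption. ring. }
  pose proof (ln_le_sub_1 _ Hs). pose proof (ln_le_sub_1 (ln z) ltac:(lra)). lra.
Qed.

Lemma mul_phi_le_self K z :
  0 <= K -> exp (exp 1) <= z -> 2 * K ^ 2 <= sqrt z -> K * phi z <= z.
Proof.
  intros HK Hz HKz. unfold phi. destruct Rle_dec as [_ | Hz']; [| contradiction].
  pose proof (exp_ineq1_le (exp 1)). pose proof exp_1_ge_2.
  pose proof (ln_ln_ge_1 z Hz). pose proof (ln_ln_le_2_sqrt z Hz).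
  pose proof (sqrt_sqrt z ltac:(lra)).
  rewrite <- (sqrt_pow2 K HK), <- sqrt_mult by (try apply pow2_ge_0; nra).
  assert (K ^ 2 * ln (ln z) <= z).
  { assert (0 <= K ^ 2) by nra. assert (0 <= sqrt z) by apply sqrt_pos. nra. }
  apply Rle_trans with (sqrt (z * z)); [apply sqrt_le_1_alt; nra |].
  rewrite sqrt_square; lra.
Qed.

Lemma ln_ln_le_3_ln_ln M z :
  exp (2 * exp 1) <= M -> exp (exp 1) <= z -> z <= (18 * M ^ 2) ^ 2 ->
  ln (ln z) <= 3 * ln (ln M).
Proof.
  intros HM Hz Hzub. pose proof exp_1_ge_2. pose proof (exp_pos (exp 1)).
  pose proof (exp_ineq1_le (2 * exp 1)).
  pose proof (ln_ge_of_exp_le _ _ HM) as HlnM.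
  pose proof (ln_ge_of_exp_le _ _ Hz) as Hlnz.
  assert (Hln18 : ln 18 <= 17) by (pose proof (ln_le_sub_1 18); lra).
  assert (Hlnz_ub : ln z <= ln M ^ 3).
  { eapply Rle_trans; [apply ln_le; [lra | exact Hzub] |].
    rewrite !ln_pow, ln_mult, ln_pow by nra. simpl INR. nra. }
  replace 3 with (INR 3) by (simpl; lra).
  rewrite <- ln_pow by lra. apply ln_le; lra.
Qed.

Lemma phi_deficit_le K M z :
  0 <= K -> K <= 3 * M -> exp (2 * exp 1) <= M -> 1 <= z ->
  K * phi z - (z - 1) <= 7 * M ^ 2 * ln (ln M).
Proof.
  intros HK HKM HM Hz. pose proof exp_1_ge_2.
  assert (HM5 : 5 <= M) by (pose proof (exp_ineq1_le (2 * exp 1)); lra).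
  assert (HL : 1 <= ln (ln M)).
  { apply ln_ln_ge_1. eapply Rle_trans; [| exact HM].
    left. apply exp_increasing. pose proof (exp_pos 1). lra. }
  destruct (Rle_dec (exp (exp 1)) z) as [Hze | Hze].
  2: { unfold phi. destruct Rle_dec; [contradiction |]. nra. }
  destruct (Rle_dec ((18 * M ^ 2) ^ 2) z) as [Hbig | Hmoderate].
  - assert (HKz : 2 * K ^ 2 <= sqrt z).
    { apply Rle_trans with (18 * M ^ 2); [nra |].
      rewrite <- (sqrt_pow2 (18 * M ^ 2)) by nra. apply sqrt_le_1_alt, Hbig. }
    pose proof (mul_phi_le_self K z HK Hze HKz). nra.
  - assert (Hphi : K * phi z <= z + K ^ 2 * ln (ln z) / 4).
    { unfold phi. destruct Rle_dec; [| contradiction].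
      apply mul_sqrt_mul_le; [lra |]. pose proof (ln_ln_ge_1 z Hze). lra. }
    pose proof (ln_ln_le_3_ln_ln M z HM Hze ltac:(lra)).
    pose proof (ln_ln_ge_1 z Hze).
    assert (K ^ 2 <= 9 * M ^ 2) by nra.
    assert (K ^ 2 * ln (ln z) <= 9 * M ^ 2 * (3 * ln (ln M))) by
      (apply Rmult_le_compat; nra).
    nra.
Qed.

Lemma Rabs_le_bounds x y : Rabs x <= y -> - y <= x <= y.
Proof. intros H. split; [pose proof (Rle_abs (- x)); rewrite Rabs_Ropp in * |
  pose proof (Rle_abs x)]; lra. Qed.

Lemma fold_right_Rplus_init (l : list R) a :
  fold_right Rplus a l = fold_right Rplus 0 l + a.
Proof. induction l as [| x l IH]; simpl; [| rewrite IH]; lra. Qed.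

Lemma seg_sum_diag f n : seg_sum f n n = 0.
Proof. unfold seg_sum. rewrite Nat.sub_diag. reflexivity. Qed.

Lemma seg_sum_split f k m n :
  (k <= m <= n)%nat -> seg_sum f k n = seg_sum f k m + seg_sum f m n.
Proof.
  intros Hkmn. unfold seg_sum.
  replace (n - k)%nat with (m - k + (n - m))%nat by lia.
  rewrite seq_app, map_app, fold_right_app, fold_right_Rplus_init.
  replace (S k + (m - k))%nat with (S m) by lia. lra.
Qed.

Lemma seg_sum_succ f k i : (k <= i)%nat -> seg_sum f k (S i) = seg_sum f k i + f (S i).
Proof.
  intros Hki. rewrite (seg_sum_split f k i (S i)) by lia.
  unfold seg_sum at 2. replace (S i - i)%nat with 1%nat by lia. simpl. lra.
Qed.

Lemma seg_sum_nonneg f k n :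
  (forall i, (k < i <= n)%nat -> 0 <= f i) -> 0 <= seg_sum f k n.
Proof.
  intros Hf. unfold seg_sum.
  assert (Hin : forall i, In i (seq (S k) (n - k)) -> 0 <= f i)
    by (intros i Hi; apply in_seq in Hi; apply Hf; lia).
  induction (seq (S k) (n - k)) as [| i l IH]; simpl; [lra |].
  pose proof (Hin i (or_introl eq_refl)).
  pose proof (IH (fun x Hx => Hin x (or_intror Hx))). lra.
Qed.

Lemma depart_S U V j i :
  depart U V (S j) (S i) = Rmax (depart U V j (S i)) (depart U V (S j) i) + V (S j) (S i).
Proof. reflexivity. Qed.

Section Tandem.

Variables (J n : nat) (U : nat -> R) (V : nat -> nat -> R).
Hypothesis HU : forall i, (1 <= i <= n)%nat -> 0 <= U i.
Hypothesis HV : forall j i, (1 <= j <= J)%nat -> (1 <= i <= n)%nat -> 0 <= V j i.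

Lemma depart_nonneg j i : (j <= J)%nat -> (i <= n)%nat -> 0 <= depart U V j i.
Proof.
  revert i. induction j as [| j IHj]; intros i Hj Hi.
  - apply seg_sum_nonneg. intros l Hl. apply HU. lia.
  - induction i as [| i IHi]; [simpl; lra |]. rewrite depart_S.
    pose proof (IHj (S i) ltac:(lia) Hi).
    pose proof (Rmax_l (depart U V j (S i)) (depart U V (S j) i)).
    pose proof (HV (S j) (S i) ltac:(lia) ltac:(lia)). lra.
Qed.

Lemma depart_S_le_path j i : (S j <= J)%nat -> (S i <= n)%nat ->
  exists k, (k <= i)%nat /\
    depart U V (S j) (S i) <= depart U V j (S k) + seg_sum (V (S j)) k (S i).
Proof.
  intros Hj. induction i as [| i IHi]; intros Hi; rewrite depart_S.
  - exists 0%nat. split; [lia |].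
    rewrite seg_sum_succ, seg_sum_diag by lia. simpl depart.
    pose proof (depart_nonneg j 1 ltac:(lia) ltac:(lia)).
    rewrite Rmax_left; lra.
  - destruct (Rle_dec (depart U V (S j) (S i)) (depart U V j (S (S i)))) as [Hle | Hgt].
    + exists (S i). split; [lia |].
      rewrite seg_sum_succ, seg_sum_diag, Rmax_left by lia || lra. lra.
    + destruct (IHi ltac:(lia)) as (k & Hk & Hpath).
      exists k. split; [lia |].
      rewrite seg_sum_succ, Rmax_right by lia || lra. lra.
Qed.

Variables (lam m G : R) (mu : nat -> R).
Hypothesis HG : 0 <= G.
Hypothesis Hrate : forall j, (1 <= j <= J)%nat -> / mu j <= m.
Hypothesis HarrU : forall k, (k <= n)%nat ->
  Rabs (seg_sum U k n - / lam * INR (n - k)) <= G * phi (INR (n - k)).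
Hypothesis HserV : forall j k, (1 <= j <= J)%nat -> (k <= n)%nat ->
  Rabs (seg_sum (V j) k n - / mu j * INR (n - k)) <= G * phi (INR (n - k)).

(* z stands for n + 1 - k0, where job k0 starts the critical path of job k
   through the first j servers. *)
Definition depart_envelope (j k : nat) : Prop :=
  exists z : nat, (n + 1 <= z + k)%nat /\
    depart U V j k <= arrival U n - / lam * (INR z - 1)
      + m * (INR z + INR k - INR n - 1 + INR j) + (2 * INR j + 1) * G * phi (INR z).

Lemma G_phi_le a b : (a <= b)%nat -> G * phi (INR a) <= G * phi (INR b).
Proof. intros Hab. apply Rmult_le_compat_l; [exact HG |]. apply phi_le, le_INR, Hab. Qed.

Lemma depart_envelope_0 k : (k <= n)%nat -> depart_envelope 0 k.
Proof.
  intros Hk. exists (n + 1 - k)%nat. split; [lia |].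
  simpl depart. unfold arrival. rewrite (seg_sum_split U 0 k n) by lia.
  destruct (Rabs_le_bounds _ _ (HarrU k Hk)) as [Hdev _].
  pose proof (G_phi_le (n - k) (n + 1 - k) ltac:(lia)).
  replace (n + 1 - k + k)%nat with (n + 1)%nat by lia.
  rewrite !minus_INR, !plus_INR in * by lia. simpl INR in *. lra.
Qed.

Lemma depart_envelope_S j k : (S j <= J)%nat -> (1 <= k <= n)%nat ->
  (forall k, (1 <= k <= n)%nat -> depart_envelope j k) -> depart_envelope (S j) k.
Proof.
  intros Hj Hk Henv. destruct k as [| i]; [lia |].
  destruct (depart_S_le_path j i Hj ltac:(lia)) as (k0 & Hk0 & Hpath).
  destruct (Henv (S k0) ltac:(lia)) as (z & Hz & Hprev).
  exists z. split; [lia |].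
  pose proof (seg_sum_split (V (S j)) k0 (S i) n ltac:(lia)) as Hsplit.
  destruct (Rabs_le_bounds _ _ (HserV (S j) k0 ltac:(lia) ltac:(lia))) as [_ Hstart].
  destruct (Rabs_le_bounds _ _ (HserV (S j) (S i) ltac:(lia) ltac:(lia))) as [Hend _].
  pose proof (G_phi_le (n - k0) z ltac:(lia)).
  pose proof (G_phi_le (n - S i) z ltac:(lia)).
  assert (Hdrift : / mu (S j) * INR (S i - k0) <= m * INR (S i - k0))
    by (apply Rmult_le_compat_r; [apply pos_INR | apply Hrate; lia]).
  rewrite !minus_INR in * by lia. rewrite !S_INR in *.
  lra.
Qed.

Lemma depart_envelope_all j k : (j <= J)%nat -> (1 <= k <= n)%nat -> depart_envelope j k.
Proof.
  revert k. induction j as [| j IHj]; intros k Hj Hk.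
  - apply depart_envelope_0. lia.
  - apply depart_envelope_S; [lia | lia |]. intros k' Hk'. apply IHj; lia.
Qed.

Lemma sojourn_le_drift : (1 <= n)%nat -> exists z : nat, (1 <= z)%nat /\
  sojourn U V J n <= m * INR J - (/ lam - m) * (INR z - 1) + (2 * INR J + 1) * G * phi (INR z).
Proof.
  intros Hn. destruct (depart_envelope_all J n (le_n J) ltac:(lia)) as (z & Hz & Hdep).
  exists z. split; [lia |]. unfold sojourn. lra.
Qed.

End Tandem.

Lemma Gamma_max_ge_a Ga Gs J : Ga <= Gamma_max Ga Gs J.
Proof.
  unfold Gamma_max. induction (seq 1 J) as [| j l IH]; simpl; [lra |].
  eapply Rle_trans; [exact IH | apply Rmax_r].
Qed.

Lemma Gamma_max_ge_s Ga Gs J j : (1 <= j <= J)%nat -> Gs j <= Gamma_max Ga Gs J.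
Proof.
  intros Hj. assert (Hin : In j (seq 1 J)) by (apply in_seq; lia).
  unfold Gamma_max. induction (seq 1 J) as [| i l IH]; simpl; [contradiction |].
  destruct Hin as [<- | Hin]; [apply Rmax_l |].
  eapply Rle_trans; [exact (IH Hin) | apply Rmax_r].
Qed.

Lemma mu_min_le mu J j : (1 <= j <= J)%nat -> mu_min mu J <= mu j.
Proof.
  intros Hj. assert (Hin : In j (seq 1 J)) by (apply in_seq; lia).
  unfold mu_min. induction (seq 1 J) as [| i l IH]; simpl; [contradiction |].
  destruct Hin as [<- | Hin]; [apply Rmin_l |].
  eapply Rle_trans; [apply Rmin_r | exact (IH Hin)].
Qed.

Lemma mu_min_pos mu J : (1 <= J)%nat ->
  (forall j, (1 <= j <= J)%nat -> 0 < mu j) -> 0 < mu_min mu J.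
Proof.
  intros HJ Hmu. assert (Hl : forall j, In j (seq 1 J) -> 0 < mu j)
    by (intros j Hj; apply in_seq in Hj; apply Hmu; lia).
  unfold mu_min. induction (seq 1 J) as [| i l IH]; simpl.
  - apply Hmu. lia.
  - apply Rmin_pos; [apply Hl; left | apply IH; intros j Hj; apply Hl; right]; auto.
Qed.

Lemma deviation_bound_weaken (f : nat -> R) (r g G : R) n :
  0 <= G -> g <= G ->
  (forall k, (k < n)%nat -> Rabs (seg_sum f k n - r * INR (n - k)) <= g * phi (INR (n - k))) ->
  forall k, (k <= n)%nat -> Rabs (seg_sum f k n - r * INR (n - k)) <= G * phi (INR (n - k)).
Proof.
  intros HG HgG Hdev k Hk.
  destruct (Nat.eq_dec k n) as [-> | Hkn].
  - rewrite seg_sum_diag, Nat.sub_diag, Rmult_0_r, Rminus_0_r, Rabs_R0.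
    apply Rmult_le_pos, phi_nonneg; exact HG.
  - eapply Rle_trans; [apply Hdev; lia |].
    apply Rmult_le_compat_r; [apply phi_nonneg | exact HgG].
Qed.

Lemma sojourn_bound_of_linear_drift J lam rho G z W :
  1 <= J -> 0 < lam -> 0 <= rho < 1 -> 0 <= G -> exp (2 * exp 1) <= lam * G -> 1 <= z ->
  W <= rho / lam * J - (1 - rho) / lam * (z - 1) + (2 * J + 1) * G * phi z ->
  W <= 7 * J ^ 2 * G ^ 2 * lam / (1 - rho) * ln (ln (J * lam * G / (1 - rho))) + J / lam.
Proof.
  intros HJ Hlam Hrho HG HlamG Hz HW.
  assert (HlamG0 : 0 < lam * G) by (pose proof (exp_pos (2 * exp 1)); lra).
  set (c := (1 - rho) / lam). assert (Hc : 0 < c) by (apply Rdiv_lt_0_compat; lra).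
  set (M := J * lam * G / (1 - rho)).
  set (K := (2 * J + 1) * G / c).
  assert (HM : exp (2 * exp 1) <= M).
  { apply Rle_trans with (lam * G); [exact HlamG |]. unfold M.
    apply (Rmult_le_reg_r (1 - rho)); [lra |].
    replace (J * lam * G / (1 - rho) * (1 - rho)) with (J * (lam * G)) by (field; lra).
    nra. }
  assert (HK : 0 <= K) by (left; apply Rdiv_lt_0_compat; nra).
  assert (HKM : K <= 3 * M).
  { unfold K, M, c. replace ((2 * J + 1) * G / ((1 - rho) / lam)) with
      ((2 * J + 1) * (lam * G / (1 - rho))) by (field; lra).
    replace (3 * (J * lam * G / (1 - rho))) with (3 * J * (lam * G / (1 - rho)))
      by (field; lra).
    assert (0 < lam * G / (1 - rho)) by (apply Rdiv_lt_0_compat; lra). nra. }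
  pose proof (phi_deficit_le K M z HK HKM HM Hz) as Hdeficit.
  replace (7 * J ^ 2 * G ^ 2 * lam / (1 - rho)) with (c * (7 * M ^ 2)) by
    (unfold c, M; field; lra).
  replace ((2 * J + 1) * G * phi z) with (c * (K * phi z)) in HW by (unfold K; field; lra).
  assert (rho / lam * J <= J / lam).
  { assert (0 <= (1 - rho) * (J / lam))
      by (apply Rmult_le_pos; [| left; apply Rdiv_lt_0_compat]; lra).
    replace (rho / lam * J) with (J / lam - (1 - rho) * (J / lam)) by (field; lra).
    lra. }
  assert (c * (K * phi z - (z - 1)) <= c * (7 * M ^ 2 * ln (ln M)))
    by (apply Rmult_le_compat_l; lra).
  fold c in HW. nra.
Qed.

Theorem theorem1
  (J n : nat) (U : nat -> R) (V : nat -> nat -> R)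
  (lam : R) (mu : nat -> R) (Ga : R) (Gs : nat -> R)
  (HJ : (1 <= J)%nat) (Hn : (1 <= n)%nat)
  (HU : forall i, (1 <= i <= n)%nat -> 0 <= U i)
  (HV : forall j i, (1 <= j <= J)%nat -> (1 <= i <= n)%nat -> 0 <= V j i)
  (Hlam : 0 < lam)
  (Hmu : forall j, (1 <= j <= J)%nat -> 0 < mu j)
  (HGa : 0 <= Ga)
  (HGs : forall j, (1 <= j <= J)%nat -> 0 <= Gs j)
  (HarrU : forall k, (k < n)%nat ->
     Rabs (seg_sum U k n - / lam * INR (n - k)) <= Ga * phi (INR (n - k)))
  (HserV : forall j k, (1 <= j <= J)%nat -> (k < n)%nat ->
     Rabs (seg_sum (V j) k n - / mu j * INR (n - k)) <= Gs j * phi (INR (n - k)))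
  (HGam : exp (2 * exp 1) <= lam * Gamma_max Ga Gs J)
  (Hrho : lam / mu_min mu J < 1) :
  let Gam := Gamma_max Ga Gs J in
  let rho := lam / mu_min mu J in
  sojourn U V J n <=
    7 * INR J ^ 2 * Gam ^ 2 * lam / (1 - rho)
      * ln (ln (INR J * lam * Gam / (1 - rho)))
    + INR J / lam.
Proof.
  intros Gam rho.
  pose proof (Gamma_max_ge_a Ga Gs J) as HGaGam. fold Gam in HGaGam.
  assert (HGam0 : 0 <= Gam) by lra.
  pose proof (mu_min_pos mu J HJ Hmu) as Hmin.
  assert (Hrate : forall j, (1 <= j <= J)%nat -> / mu j <= / mu_min mu J)
    by (intros j Hj; apply Rinv_le_contravar; [exact Hmin | apply mu_min_le, Hj]).
  destruct (sojourn_le_drift J n U V HU HV lam (/ mu_min mu J) Gam mu HGam0 Hrate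
    (deviation_bound_weaken U (/ lam) Ga Gam n HGam0 HGaGam HarrU)
    (fun j k Hj => deviation_bound_weaken (V j) (/ mu j) (Gs j) Gam n HGam0
       (Gamma_max_ge_s Ga Gs J j Hj) (fun k => HserV j k Hj) k) Hn)
    as (z & Hz & Hsoj).
  apply (sojourn_bound_of_linear_drift (INR J) lam rho Gam (INR z)).
  - apply (le_INR 1). exact HJ.
  - exact Hlam.
  - split; [left; apply Rdiv_lt_0_compat; lra | exact Hrho].
  - exact HGam0.
  - exact HGam.
  - apply (le_INR 1). exact Hz.
  - replace (rho / lam) with (/ mu_min mu J) by (unfold rho; field; lra).
    replace ((1 - rho) / lam) with (/ lam - / mu_min mu J) by (unfold rho; field; lra).
    exact Hsoj.
Qed.
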